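(* Let $d\ge 3$ and $0\le j\le \left\lfloor \frac{3(d-1)}{2}\right\rfloor$. The elements of $\operatorname{Ker}(E)\cap A(d)_j$ on which every $\sigma\in S_3$ acts by $\operatorname{sgn}(\sigma)$ are exactly the elements $P=\sum_{\mu\in\mathscr{P}^+_{3,d-1}(j)}\beta_\mu\langle x^\mu\rangle$ ($\beta_\mu\in\Bbbk$) with $E(P)=0$, and the multiplicity of the sign representation in $\operatorname{Ker}(E)\cap A(d)_j$ is $$\operatorname{sign}(d,j)=p^+_{3,d-1}(j)-p^+_{3,d-1}(j-1).$$
   Context: $\Bbbk$ is an algebraically closed field of characteristic $0$. For an integer $d\ge 1$, $A(d)=\Bbbk[x_1,x_2,x_3]/(x_1^d,x_2^d,x_3^d)=\bigoplus_j A(d)_j$ with its standard grading. The symmetric group $S_3$ acts on $A(d)$ by permuting the variables. The linear map $E:A(d)_{j+1}\to A(d)_j$ is defined on the monomial basis by $E(x_1^{a_1}x_2^{a_2}x_3^{a_3})=\sum_{k=1}^{3} a_k(d-a_k)\,x_1^{a_1}\cdots x_k^{a_k-1}\cdots x_3^{a_3}$; it commutes with the $S_3$-action. $\operatorname{sign}(d,j)$ denotes the multiplicity of the sign representation in $\operatorname{Ker}(E)\cap A(d)_j$. For integers $l\ge0$, $n$: $\mathscr{P}^+_{3,l}(n)$ is the set of integer triples $(a,b,c)$ with $l\ge a> b> c\ge 0$ and $a+b+c=n$, and $p^+_{3,l}(n)=|\mathscr{P}^+_{3,l}(n)|$ ($=0$ for $n<0$). For $\mu=(a,b,c)$, $\langle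 x^\mu\rangle=\sum_{\sigma\in S_3}\operatorname{sgn}(\sigma)\,\sigma(x_1^ax_2^bx_3^c)$. *)

From HB Require Import structures.
From mathcomp Require Import all_boot all_order all_algebra all_fingroup.
Set Implicit Arguments. Unset Strict Implicit. Unset Printing Implicit Defensive.
Import Order.TTheory GRing.Theory Num.Theory.
Local Open Scope ring_scope.

Section Defs.
Variable K : fieldType.
Variable d : nat.

(* Exponent vectors (a_1,a_2,a_3) with 0 <= a_k <= d-1, i.e. the monomial
   basis of A(d) = K[x1,x2,x3]/(x1^d,x2^d,x3^d).  For d >= 1, 'I_(d.-1).+1
   is {0,...,d-1}. *)
Definition mon := {ffun 'I_3 -> 'I_(d.-1).+1}.

(* A(d) as the K-vector space with basis the monomials. *)
Definition Alg := {ffun mon -> K^o}.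

Definition deg (a : mon) : nat := (\sum_(i < 3) (a i : nat))%N.

Definition mono (a : mon) : Alg := [ffun b => (b == a)%:R].

Definition homog (j : nat) (P : Alg) : Prop := forall a, P a != 0 -> deg a = j.
Definition Ahom (j : nat) : {vspace Alg} :=
  <<[seq mono a | a <- enum [pred a : mon | deg a == j]]>>%VS.

Lemma pred_ord_lt (n : nat) (i : 'I_n.+1) : ((i : nat).-1 < n.+1)%N.
Proof. exact: leq_ltn_trans (leq_pred _) (ltn_ord i). Qed.

Definition decr (a : mon) (k : 'I_3) : mon :=
  [ffun i => if i == k then Ordinal (pred_ord_lt (a k)) else a i].

(* E(x^a) = sum_k a_k (d - a_k) x^(a - e_k) ; when a_k = 0 the coefficient
   vanishes, so the value of decr is irrelevant there. *)
Definition Emon (a : mon) : Alg :=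
  \sum_(k < 3) (((a k : nat) * (d - a k))%N)%:R *: mono (decr a k).

Definition E (P : Alg) : Alg := \sum_a P a *: Emon a.

(* permutation action: sigma(x_1^a1 x_2^a2 x_3^a3) = x_{s1}^a1 x_{s2}^a2 x_{s3}^a3,
   i.e. the exponent vector b of the image satisfies b (s i) = a i. *)
Definition actm (s : 'S_3) (a : mon) : mon := [ffun i => a ((s^-1)%g i)].
Definition sact (s : 'S_3) (P : Alg) : Alg := \sum_a P a *: mono (actm s a).

Definition alt (mu : mon) : Alg := \sum_(s : 'S_3) ((-1) ^+ s) *: mono (actm s mu).

Definition signspace (j : nat) : {vspace Alg} :=
  (Ahom j :&: lker (linfun E) :&:
   \bigcap_(s : 'S_3) lker (linfun (fun P => sact s P - ((-1) ^+ s) *: P)))%VS.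

(* sign(d,j): multiplicity of the sign representation in Ker(E) ∩ A(d)_j
   = dimension of its sign-isotypic component (sgn is one-dimensional). *)
Definition signmult (j : nat) : nat := \dim (signspace j).

End Defs.

(* P^+_{3,l}(n): triples l >= a > b > c >= 0 with a+b+c = n, encoded as
   functions 'I_3 -> 'I_l.+1 (mu 0 = a, mu 1 = b, mu 2 = c). *)
Definition Pplus (l : nat) (n : int) : {set {ffun 'I_3 -> 'I_l.+1}} :=
  [set mu : {ffun 'I_3 -> 'I_l.+1} |
     [&& (mu (@inord 2 1) < mu ord0)%N, (mu (@inord 2 2) < mu (@inord 2 1))%N
       & ((\sum_(i < 3) (mu i : nat))%N%:Z == n)]].

Definition pplus (l : nat) (n : int) : nat := #|Pplus l n|.

(* E and the multiplication F by x_1 + x_2 + x_3 satisfy the sl_2 relation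
   [E, F] = 3(d - 1) - 2t on A(d)_t.  By induction on t this makes EF injective,
   hence bijective, on A(d)_t whenever 2t + 2 <= 3(d - 1), so E maps A(d)_j onto
   A(d)_(j-1) for 2j <= 3(d - 1).  Since E commutes with S_3, averaging against
   the sign character shows that E also maps the sign component of A(d)_j onto
   that of A(d)_(j-1).  An alternating element vanishes on every monomial with a
   repeated exponent, so the sign component of A(d)_t has basis the <x^mu>,
   mu in P^+_{3,d-1}(t), and rank-nullity gives the multiplicity. *)

From Pilot Require Import Defs.
From HB Require Import structures.
From mathcomp Require Import all_boot all_order all_algebra all_fingroup zify ring.
Import Order.TTheory GRing.Theory Num.Theory.
Local Open Scope ring_scope.
Set Implicit Arguments. Unset Strict Implicit. Unset Printing Implicit Defensive.

Section Monomials.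
Variable d : nat.
Local Notation mon := (mon d).
Local Notation actm := (@Defs.actm d).

Lemma mon_leq (b : mon) k : (b k <= d.-1)%N.
Proof. by rewrite -ltnS ltn_ord. Qed.

Definition incr (b : mon) (k : 'I_3) : mon :=
  [ffun i => if i == k then inord (b k).+1 else b i].

Lemma incr_self (b : mon) k : (b k < d.-1)%N -> incr b k k = (b k).+1 :> nat.
Proof. by move=> h; rewrite ffunE eqxx inordK. Qed.

Lemma incr_other (b : mon) k i : i != k -> incr b k i = b i.
Proof. by move=> h; rewrite ffunE (negbTE h). Qed.

Lemma decr_self (b : mon) k : decr b k k = (b k).-1 :> nat.
Proof. by rewrite ffunE eqxx. Qed.

Lemma decr_other (b : mon) k i : i != k -> decr b k i = b i.
Proof. by move=> h; rewrite ffunE (negbTE h). Qed.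

Lemma incrK (b : mon) k : (b k < d.-1)%N -> decr (incr b k) k = b.
Proof.
move=> h; apply/ffunP => i; have [->|ne] := eqVneq i k.
  by apply/val_inj; rewrite /= decr_self incr_self.
by rewrite decr_other // incr_other.
Qed.

Lemma decrK (b : mon) k : (0 < b k)%N -> incr (decr b k) k = b.
Proof.
move=> h; apply/ffunP => i; have [->|ne] := eqVneq i k; last first.
  by rewrite incr_other // decr_other.
apply/val_inj; rewrite /= incr_self decr_self ?prednK //.
by have := mon_leq b k; lia.
Qed.

Lemma decr_incrC (b : mon) k l : k != l -> decr (incr b k) l = incr (decr b l) k.
Proof.
move=> kl; have lk : l != k by rewrite eq_sym.
apply/ffunP => i; have [->|ik] := eqVneq i k.
  by rewrite decr_other // !ffunE eqxx (negbTE kl).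
have [->|il] := eqVneq i l.
  by apply/val_inj; rewrite /= decr_self !incr_other // decr_self.
by rewrite decr_other // !incr_other // decr_other.
Qed.

Lemma deg_incr (b : mon) k : (b k < d.-1)%N -> deg (incr b k) = (deg b).+1.
Proof.
move=> h; rewrite /deg (bigD1 k) //= [in RHS](bigD1 k) //= incr_self //.
by under eq_bigr => i ne do rewrite incr_other //.
Qed.

Lemma deg_decr (b : mon) k : (0 < b k)%N -> deg (decr b k) = (deg b).-1.
Proof.
move=> h; rewrite /deg (bigD1 k) //= [in RHS](bigD1 k) //= decr_self.
under eq_bigr => i ne do rewrite decr_other //.
by case: (b k : nat) h.
Qed.

Lemma actm_coord (s : 'S_3) (a : mon) i : actm s a i = a (s^-1 i)%g.
Proof. by rewrite ffunE. Qed.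

Lemma actm_comp (s t : 'S_3) (a : mon) : actm s (actm t a) = actm (t * s)%g a.
Proof. by apply/ffunP => i; rewrite !actm_coord invMg permM. Qed.

Lemma actm1 (a : mon) : actm 1%g a = a.
Proof. by apply/ffunP => i; rewrite actm_coord invg1 perm1. Qed.

Lemma actmK (s : 'S_3) : cancel (actm s) (actm s^-1%g).
Proof. by move=> a; rewrite actm_comp mulgV actm1. Qed.

Lemma actmKV (s : 'S_3) : cancel (actm s^-1%g) (actm s).
Proof. by move=> a; rewrite actm_comp mulVg actm1. Qed.

Lemma deg_actm (s : 'S_3) (a : mon) : deg (actm s a) = deg a.
Proof.
rewrite /deg (reindex_inj (@perm_inj _ s)) /=.
by apply: eq_bigr => i _; rewrite actm_coord permK.
Qed.

Lemma actm_incr (s : 'S_3) (b : mon) k :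
  actm s^-1%g (incr b (s k)) = incr (actm s^-1%g b) k.
Proof.
apply/ffunP => i; rewrite !actm_coord invgK !ffunE (inj_eq (@perm_inj _ s)).
by rewrite invgK.
Qed.

Local Notation o0 := (ord0 : 'I_3).
Local Notation o1 := (@inord 2 1).
Local Notation o2 := (@inord 2 2).

Lemma ord3P (i : 'I_3) : [\/ i = o0, i = o1 | i = o2].
Proof.
by case: i => [[|[|[|n]]] h] //; [apply: Or31 | apply: Or32 | apply: Or33];
  apply/val_inj; rewrite /= ?inordK.
Qed.

Lemma ord3_eqF : ((o0 == o1) = false) * ((o1 == o0) = false) * ((o0 == o2) = false)
  * ((o2 == o0) = false) * ((o1 == o2) = false) * ((o2 == o1) = false).
Proof. by do !split; rewrite -(inj_eq val_inj) /= ?inordK. Qed.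

Definition decreasing (mu : mon) := ((mu o1 < mu o0)%N && (mu o2 < mu o1)%N).

Lemma decreasing_lt (mu : mon) : decreasing mu ->
  forall i j : 'I_3, (i < j)%N -> (mu j < mu i)%N.
Proof.
case/andP => h1 h2 i j.
by case: (ord3P i) => ->; case: (ord3P j) => ->; rewrite /= ?inordK //; lia.
Qed.

Lemma decreasing_actm (mu : mon) (s : 'S_3) :
  decreasing mu -> decreasing (actm s mu) -> s = 1%g.
Proof.
move=> hmu hs.
have s_mono (i j : 'I_3) : (i < j)%N -> (s^-1 i < s^-1 j)%g%N.
  move=> ij; rewrite ltnNge leq_eqVlt negb_or; apply/andP; split.
    by apply/eqP => /val_inj/perm_inj e; move: ij; rewrite e ltnn.
  apply/negP => lt; have := decreasing_lt hmu lt; have := decreasing_lt hs ij.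
  by rewrite !actm_coord; lia.
suff si : s^-1%g = 1%g by rewrite -[s]invgK si invg1.
have := s_mono o0 o1; have := s_mono o1 o2.
rewrite /= !inordK // => /(_ isT) h12 /(_ isT) h01; have l2 := ltn_ord (s^-1 o2)%g.
apply/permP => i; rewrite perm1; apply/val_inj.
by case: (ord3P i) => ->; rewrite /= ?inordK //; lia.
Qed.

Lemma perm3_exists (i0 i1 i2 : 'I_3) : i0 != i1 -> i1 != i2 -> i0 != i2 ->
  exists s : 'S_3, [/\ s o0 = i0, s o1 = i1 & s o2 = i2].
Proof.
move=> h01 h12 h02.
pose f k := if k == o0 then i0 else if k == o1 then i1 else i2.
have finj : injective f.
  move=> x y; rewrite /f.
  by case: (ord3P x) => ->; case: (ord3P y) => ->; rewrite ?ord3_eqF ?eqxx // => e;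
    move: h01 h12 h02; rewrite e eqxx.
by exists (perm finj); rewrite !permE /f ?ord3_eqF ?eqxx.
Qed.

Lemma sort_mon (b : mon) : injective b -> exists s : 'S_3, decreasing (actm s b).
Proof.
move=> binj.
have sorted3 i0 i1 i2 : i0 != i1 -> i1 != i2 -> i0 != i2 ->
    (b i1 < b i0)%N -> (b i2 < b i1)%N -> exists s : 'S_3, decreasing (actm s b).
  move=> n01 n12 n02 l1 l2; have [s [e0 e1 e2]] := perm3_exists n01 n12 n02.
  by exists s^-1%g; rewrite /decreasing !actm_coord invgK e0 e1 e2 l1 l2.
have ne i j : i != j -> (b i != b j :> nat).
  by move=> ij; rewrite (inj_eq val_inj) (inj_eq binj).
have := ne o0 o1; have := ne o1 o2; have := ne o0 o2; rewrite !ord3_eqF.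
move=> /(_ isT); rewrite neq_ltn => /orP[] h02 /(_ isT); rewrite neq_ltn => /orP[] h12
  /(_ isT); rewrite neq_ltn => /orP[] h01;
  [ apply: (sorted3 o2 o1 o0) | apply: (sorted3 o2 o0 o1) | apply: (sorted3 o1 o2 o0)
  | apply: (sorted3 o0 o1 o2) | apply: (sorted3 o0 o1 o2) | apply: (sorted3 o0 o2 o1)
  | apply: (sorted3 o1 o0 o2) | apply: (sorted3 o0 o1 o2) ];
  rewrite ?ord3_eqF //; lia.
Qed.

End Monomials.

Lemma mem_Pplus d (mu : mon d) n :
  (mu \in Pplus d.-1 n) = decreasing mu && ((deg mu)%:Z == n).
Proof. by rewrite inE /decreasing andbA. Qed.

Section Operators.
Variables (K : fieldType) (d : nat).
Local Notation mon := (mon d).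
Local Notation Alg := (Alg K d).
Local Notation actm := (@Defs.actm d).

Lemma monoE (a b : mon) : mono K a b = (b == a)%:R.
Proof. by rewrite ffunE. Qed.

Lemma Alg_expand (P : Alg) : P = \sum_a P a *: mono K a.
Proof.
apply/ffunP => b; rewrite sum_ffunE (bigD1 b) //= big1 ?addr0 => [|a ne].
  by rewrite ffunE monoE eqxx /GRing.scale /= mulr1.
by rewrite ffunE monoE eq_sym (negbTE ne) /GRing.scale /= mulr0.
Qed.

(* [Ecoef b k] is the coefficient of x^b in E(x^(b + e_k)). *)
Definition Ecoef (b : mon) k : K := ((b k).+1 * (d.-1 - b k))%:R.

Lemma Ecoef_eq0 (b : mon) k : (d.-1 <= b k)%N -> Ecoef b k = 0.
Proof. by move=> h; rewrite /Ecoef (_ : d.-1 - b k = 0)%N ?muln0 //; lia. Qed.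

Lemma Emon_coef (a b : mon) k :
  ((a k * (d - a k))%:R * (b == decr a k)%:R : K) = (a == incr b k)%:R * Ecoef b k.
Proof.
have ak_le := mon_leq a k; have [bk_lt|bk_ge] := ltnP (b k) d.-1; last first.
  rewrite Ecoef_eq0 // mulr0; have [e|] := eqVneq b (decr a k); last by rewrite mulr0.
  have := decr_self a k; rewrite -e => ak0.
  by rewrite (_ : a k = 0 :> nat)%N ?mul0r //; lia.
have [ak0|ak_gt0] := posnP (a k).
  rewrite ak0 mul0r; have [e|] := eqVneq a (incr b k); last by rewrite mul0r.
  by move: ak0; rewrite e incr_self.
have -> : (b == decr a k) = (a == incr b k).
  apply/eqP/eqP => [->|->]; by rewrite ?decrK ?incrK.
have [e|] := eqVneq a (incr b k); last by rewrite !mulr0 mul0r.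
rewrite mulr1 mul1r /Ecoef e incr_self //; congr _%:R; lia.
Qed.

Lemma E_coord (P : Alg) (b : mon) : E P b = \sum_k Ecoef b k * P (incr b k).
Proof.
rewrite /E sum_ffunE.
under eq_bigr => a _ do rewrite ffunE /Emon sum_ffunE scaler_sumr.
rewrite exchange_big /=; apply: eq_bigr => k _.
under eq_bigr => a _ do rewrite !ffunE /GRing.scale /= Emon_coef mulrCA.
rewrite (bigD1 (incr b k)) //= eqxx mul1r [P _ * _]mulrC big1 ?addr0 // => a /negbTE ->.
by rewrite mul0r.
Qed.

Lemma E_linear : linear (@E K d).
Proof.
move=> c P Q; rewrite /E scaler_sumr -big_split; apply: eq_bigr => a _.
by rewrite ffunE [(c *: P) a]ffunE scalerDl scalerA.
Qed.

(* [Fmul P] is the product (x_1 + x_2 + x_3) P in A(d). *)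
Definition Fmul (P : Alg) : Alg :=
  [ffun b : mon => \sum_k (if (0 < b k)%N then P (decr b k) else 0)].

Lemma Fmul_linear : linear Fmul.
Proof.
move=> c P Q; apply/ffunP => b; rewrite !ffunE scaler_sumr -big_split /=.
by apply: eq_bigr => k _; case: ifP => _; rewrite ?ffunE // /GRing.scale /= mulr0 addr0.
Qed.

Lemma sact_coord (s : 'S_3) (P : Alg) b : sact s P b = P (actm s^-1%g b).
Proof.
rewrite sum_ffunE (bigD1 (actm s^-1%g b)) //= big1 ?addr0 => [|a ne].
  by rewrite ffunE monoE actmKV eqxx /GRing.scale /= mulr1.
rewrite ffunE monoE; have [e|_] := eqVneq b (actm s a).
  by move: ne; rewrite e actmK eqxx.
by rewrite /GRing.scale /= mulr0.
Qed.

Lemma sact_linear (s : 'S_3) : linear (@sact K d s).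
Proof. by move=> c P Q; apply/ffunP => b; rewrite !ffunE !sact_coord !ffunE. Qed.

Definition sign_defect (s : 'S_3) (P : Alg) : Alg := sact s P - ((-1) ^+ s) *: P.

Lemma sign_defect_linear s : linear (@sign_defect s).
Proof.
move=> c P Q; rewrite /sign_defect sact_linear scalerDr scalerBr opprD addrACA.
by rewrite !scalerA mulrC.
Qed.

End Operators.

HB.instance Definition _ (K : fieldType) (d : nat) :=
  GRing.isLinear.Build K (Alg K d) (Alg K d) *:%R (@E K d) (@E_linear K d).
HB.instance Definition _ (K : fieldType) (d : nat) :=
  GRing.isLinear.Build K (Alg K d) (Alg K d) *:%R (@Fmul K d) (@Fmul_linear K d).
HB.instance Definition _ (K : fieldType) (d : nat) s :=
  GRing.isLinear.Build K (Alg K d) (Alg K d) *:%R (@sact K d s) (@sact_linear K d s).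
HB.instance Definition _ (K : fieldType) (d : nat) s :=
  GRing.isLinear.Build K (Alg K d) (Alg K d) *:%R (@sign_defect K d s)
    (@sign_defect_linear K d s).

Section Lowering.
Variables (K : fieldType) (d : nat).
Local Notation mon := (mon d).
Local Notation Alg := (Alg K d).
Local Notation Ecoef := (@Ecoef K d).

Lemma homog_eq0 t (P : Alg) b : homog t P -> deg b != t -> P b = 0.
Proof. by move=> h; apply: contraNeq => /h ->. Qed.

Lemma homog0 t : homog t (0 : Alg).
Proof. by move=> b; rewrite ffunE eqxx. Qed.

Lemma homogZ t c (P : Alg) : homog t P -> homog t (c *: P).
Proof. by move=> h b; rewrite ffunE /GRing.scale /= mulf_eq0 negb_or => /andP[_ /h]. Qed.

Lemma homogD t (P Q : Alg) : homog t P -> homog t Q -> homog t (P + Q).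
Proof.
move=> hP hQ b; rewrite ffunE; have [->|/hP //] := eqVneq (P b) 0.
by rewrite add0r => /hQ.
Qed.

Lemma homog_sum t (I : Type) (r : seq I) (Pr : pred I) (F : I -> Alg) :
  (forall i, Pr i -> homog t (F i)) -> homog t (\sum_(i <- r | Pr i) F i).
Proof.
move=> h; elim/big_rec: _ => [|i x Pi hx]; first exact: homog0.
exact: homogD (h i Pi) hx.
Qed.

Lemma homogI s t (P : Alg) :
  homog s P -> homog t P -> s != t -> P = 0.
Proof.
move=> hs ht st; apply/ffunP => b; rewrite ffunE; apply/eqP/negPn/negP => nz.
by move: st; rewrite -(hs b nz) -(ht b nz) eqxx.
Qed.

Lemma homog_mono (a : mon) : homog (deg a) (mono K a).
Proof. by move=> b; rewrite monoE; have [->|] := eqVneq b a; rewrite ?eqxx. Qed.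

Lemma homog_E t (P : Alg) : homog t P -> homog t.-1 (E P).
Proof.
move=> h b; apply: contraNeq => ne; rewrite E_coord big1 // => k _.
have [bk_lt|bk_ge] := ltnP (b k) d.-1; last by rewrite Ecoef_eq0 // mul0r.
by rewrite (homog_eq0 h) ?mulr0 // deg_incr //; apply: contra ne => /eqP <-.
Qed.

Lemma homog_Fmul t (P : Alg) : homog t P -> homog t.+1 (Fmul P).
Proof.
move=> h b; rewrite ffunE; apply: contraNeq => ne; rewrite big1 // => k _.
case: ifP => bk_gt0 //; rewrite (homog_eq0 h) // deg_decr //.
apply: contra ne => /eqP <-; rewrite prednK //.
by apply: leq_trans bk_gt0 _; rewrite /deg (bigD1 k) //= leq_addr.
Qed.

Lemma homog_sact t s (P : Alg) : homog t P -> homog t (sact s P).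
Proof. by move=> h b; rewrite sact_coord => /h; rewrite deg_actm. Qed.

Lemma E_sact s (P : Alg) : E (sact s P) = sact s (E P).
Proof.
apply/ffunP => b; rewrite E_coord sact_coord E_coord (reindex_inj (@perm_inj _ s)) /=.
apply: eq_bigr => k _; rewrite sact_coord actm_incr; congr (_ * _).
by rewrite /Ecoef actm_coord invgK.
Qed.

(* The coefficient identity behind [E, F], for x = b_k and m = d - 1. *)
Lemma Ecoef_commutator (x m : nat) : (x <= m)%N ->
  ((x.+1 * (m - x))%:R : K) =
  (if (0 < x)%N then (x * (m - x.-1))%:R else 0) + ((m - x)%:R - x%:R).
Proof.
case: x => [|x] h /=; first by rewrite mul1n add0r subr0.
have -> : (x.+2 * (m - x.+1) = x.+1 * (m - x) + (m - x.+1) - x.+1)%N.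
  have [r ->] : exists r, m = (x.+1 + r)%N by exists (m - x.+1)%N; lia.
  have -> : (x.+1 + r - x.+1 = r)%N by lia.
  have -> : (x.+1 + r - x = r.+1)%N by lia.
  nia.
by rewrite natrB ?natrD ?addrA //; nia.
Qed.

Definition weight (b : mon) : K := \sum_k ((d.-1 - b k)%:R - (b k)%:R).

Lemma EFmul_coord (P : Alg) b : E (Fmul P) b = Fmul (E P) b + weight b * P b.
Proof.
rewrite E_coord ffunE /weight mulr_suml.
have term k : Ecoef b k * Fmul P (incr b k) =
   \sum_l (if (0 < b l)%N then Ecoef (decr b l) k * P (incr (decr b l) k) else 0)
   + ((d.-1 - b k)%:R - (b k)%:R) * P b.
  rewrite ffunE mulr_sumr (bigD1 k) //= [X in _ = X + _](bigD1 k) //= addrAC.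
  congr (_ + _); last first.
    apply: eq_bigr => l lk; rewrite incr_other // decr_incrC 1?eq_sym //.
    by rewrite /Ecoef decr_other 1?eq_sym //; case: ifP; rewrite ?mulr0.
  have -> : Ecoef b k * (if (0 < incr b k k)%N then P (decr (incr b k) k) else 0)
          = Ecoef b k * P b.
    have [bk_lt|bk_ge] := ltnP (b k) d.-1; first by rewrite incr_self // incrK.
    by rewrite Ecoef_eq0 // !mul0r.
  have -> : (if (0 < b k)%N then Ecoef (decr b k) k * P (incr (decr b k) k) else 0)
         = (if (0 < b k)%N then (b k * (d.-1 - (b k).-1))%:R else 0) * P b.
    by case: ifP => h; rewrite ?mul0r // decrK // /Ecoef decr_self prednK.
  by rewrite /Ecoef Ecoef_commutator ?mon_leq // mulrDl.
under eq_bigr => k _ do rewrite term.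
rewrite big_split /= exchange_big /=; congr (_ + _); apply: eq_bigr => l _.
by case: ifP => _; rewrite ?E_coord // big1.
Qed.

Lemma sum_co_deg (b : mon) : (\sum_k (d.-1 - b k) = 3 * d.-1 - deg b)%N.
Proof.
suff : (\sum_k (d.-1 - b k) + deg b = 3 * d.-1)%N by lia.
rewrite /deg -big_split /= (eq_bigr (fun _ => d.-1)) => [|k _].
  by rewrite sum_nat_const card_ord.
by rewrite subnK ?mon_leq.
Qed.

Lemma EFmul_homog t (P : Alg) : homog t P ->
  E (Fmul P) = Fmul (E P) + ((3 * d.-1 - t)%:R - t%:R) *: P.
Proof.
move=> h; apply/ffunP => b; rewrite EFmul_coord [RHS]ffunE; congr (_ + _).
rewrite ffunE /GRing.scale /=.
have [->|/h dt] := eqVneq (P b) 0; first by rewrite !mulr0.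
by rewrite /weight sumrB -!natr_sum sum_co_deg -dt.
Qed.

End Lowering.

Section Alternating.
Variables (K : fieldType) (d : nat).
Local Notation mon := (mon d).
Local Notation Alg := (Alg K d).
Local Notation actm := (@Defs.actm d).
Local Notation sgn s := ((-1) ^+ s : K).

Definition alternating (P : Alg) := forall s : 'S_3, sact s P = sgn s *: P.

Lemma alternating_coord (P : Alg) s b : alternating P -> P (actm s^-1%g b) = sgn s * P b.
Proof. by move=> h; rewrite -sact_coord h ffunE. Qed.

Lemma sact_comp s t (P : Alg) : sact t (sact s P) = sact (s * t)%g P.
Proof. by apply/ffunP => b; rewrite !sact_coord actm_comp invMg. Qed.

Lemma sact_mono s (a : mon) : sact s (mono K a) = mono K (actm s a).
Proof.
apply/ffunP => b; rewrite sact_coord !monoE; congr ((_ : bool)%:R).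
by apply/eqP/eqP => [<-|->]; rewrite ?actmKV ?actmK.
Qed.

Lemma alternating_E (P : Alg) : alternating P -> alternating (E P).
Proof. by move=> h s; rewrite -E_sact h linearZ. Qed.

Definition alternator (P : Alg) : Alg := \sum_(s : 'S_3) sgn s *: sact s P.

Lemma alternator_alternating (P : Alg) : alternating (alternator P).
Proof.
move=> t; rewrite /alternator linear_sum scaler_sumr.
rewrite (reindex_inj (mulIg t^-1%g)) /=; apply: eq_bigr => s _.
rewrite linearZ /= sact_comp -mulgA mulVg mulg1 scalerA odd_permM odd_permV.
by rewrite signr_addb mulrC.
Qed.

Lemma alternator_id (P : Alg) : alternating P -> alternator P = 6%:R *: P.
Proof.
move=> h; rewrite /alternator.
under eq_bigr => s _ do rewrite h scalerA -signr_addb addbb scale1r.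
by rewrite sumr_const card_Sn scaler_nat.
Qed.

Lemma E_alternator (P : Alg) : E (alternator P) = alternator (E P).
Proof. by rewrite linear_sum; apply: eq_bigr => s _; rewrite linearZ /= E_sact. Qed.

Lemma homog_alternator t (P : Alg) : homog t P -> homog t (alternator P).
Proof. by move=> h; apply: homog_sum => s _; apply/homogZ/homog_sact. Qed.

Lemma alt_alternator (mu : mon) : alt K mu = alternator (mono K mu).
Proof. by apply: eq_bigr => s _; rewrite sact_mono. Qed.

Lemma alternating_alt (mu : mon) : alternating (alt K mu).
Proof. by rewrite alt_alternator; apply: alternator_alternating. Qed.

Lemma homog_alt (mu : mon) : homog (deg mu) (alt K mu).
Proof. by rewrite alt_alternator; apply/homog_alternator/homog_mono. Qed.

Lemma alt_decreasing (mu nu : mon) :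
  decreasing mu -> decreasing nu -> alt K mu nu = (nu == mu)%:R.
Proof.
move=> dec_mu dec_nu; rewrite sum_ffunE (bigD1 1%g) //= big1 ?addr0 => [|s s1].
  by rewrite ffunE monoE actm1 odd_perm1 scale1r.
rewrite ffunE monoE; have [e|] := eqVneq nu (actm s mu); last by rewrite scaler0.
by move: s1; rewrite (decreasing_actm dec_mu (etrans (esym (congr1 _ e)) dec_nu)) eqxx.
Qed.

End Alternating.

Section Subspaces.
Variables (K : fieldType) (d : nat).
Local Notation Alg := (Alg K d).

Lemma memv_Ahom t (v : Alg) : (v \in Ahom K d t) <-> homog t v.
Proof.
split => [hv|hv].
  move: hv; rewrite /Ahom; set X := [seq _ | _ <- _] => hv.
  rewrite (@coord_span _ _ _ (in_tuple X) v hv); apply: homog_sum => i _.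
  apply: homogZ; have /mapP[a] : X`_i \in X by apply/mem_nth/ltn_ord.
  by rewrite mem_enum inE => /eqP <- ->; apply: homog_mono.
rewrite [v]Alg_expand (bigID (fun a => deg a == t)) /= [X in _ + X]big1 => [|a /negbTE ha].
  rewrite addr0; apply: memv_suml => a ha; apply/memvZ/memv_span.
  by apply: map_f; rewrite mem_enum.
by rewrite (homog_eq0 hv) ?ha // scale0r.
Qed.

(* The sign-isotypic component of A(d)_t, in the syntactic form used by
   [signspace]. *)
Definition Asign t : {vspace Alg} :=
  (Ahom K d t :&:
   \bigcap_(s : 'S_3) lker (linfun (fun P : Alg => sact s P - ((-1) ^+ s) *: P)))%VS.

Lemma memv_Asign t (v : Alg) : v \in Asign t <-> homog t v /\ alternating v.
Proof.
have sgnE s : (v \in lker (linfun (fun P : Alg => sact s P - ((-1) ^+ s) *: P)))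
    = (sact s v == (-1) ^+ s *: v).
  by rewrite memv_ker (lfunE (sign_defect s)) subr_eq0.
rewrite memv_cap; split.
  case/andP => /memv_Ahom hv; rewrite memvE => /subv_bigcapP h_cap.
  by split => // s; apply/eqP; rewrite -sgnE memvE h_cap.
case=> hv alt_v; apply/andP; split; first exact/memv_Ahom.
by rewrite memvE; apply/subv_bigcapP => s _; rewrite -memvE sgnE alt_v.
Qed.

Lemma signspaceE t : signspace K d t = (Asign t :&: lker (linfun (@E K d)))%VS.
Proof. by rewrite /signspace /Asign -capvA [(lker _ :&: _)%VS]capvC capvA. Qed.

End Subspaces.

Section CharZero.
Variables (K : fieldType) (d : nat).
Hypothesis charK : [pchar K] =i pred0.
Local Notation mon := (mon d).
Local Notation Alg := (Alg K d).
Local Notation actm := (@Defs.actm d).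
Local Notation sgn s := ((-1) ^+ s : K).

Lemma natf_neq0 n : (0 < n)%N -> n%:R != 0 :> K.
Proof. by rewrite ((pcharf0P K).1 charK) -lt0n. Qed.

(* Induction on t: [v = F w] with [w = - E v / n] of degree t - 1, and the
   commutator relation turns [F E v = - n v] into [F E w = - n' w] with
   [n' = n + 3(d - 1) - 2(t - 1) > 0]. *)
Lemma Fmul_E_eigen_eq0 t (v : Alg) n : (2 * t <= 3 * d.-1 + 2)%N -> homog t v ->
  (0 < n)%N -> Fmul (E v) = - n%:R *: v -> v = 0.
Proof.
elim: t v n => [|t IH] v n ht hv n_gt0 eFE.
  have hv1 : homog 1 (- n%:R *: v) by rewrite -eFE; apply: homog_Fmul; exact: homog_E hv.
  have /eqP := homogI (homogZ hv) hv1 isT.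
  by rewrite scaler_eq0 oppr_eq0 (negbTE (natf_neq0 n_gt0)) => /eqP.
have nK := natf_neq0 n_gt0.
pose w := - n%:R^-1 *: E v.
have hw : homog t w by apply: homogZ; exact: homog_E hv.
have vE : v = Fmul w by rewrite linearZ /= eFE scalerA mulrNN mulVf // scale1r.
have EFw : E (Fmul w) = - n%:R *: w.
  by rewrite -vE /w scalerA mulrN mulNr opprK divff // scale1r.
have FEw : Fmul (E w) = - (n + (3 * d.-1 - t) - t)%N%:R *: w.
  apply: (addIr (((3 * d.-1 - t)%:R - t%:R) *: w)).
  rewrite -EFmul_homog // EFw -scalerDl natrB; last by lia.
  by rewrite natrD; congr (_ *: _); ring.
by rewrite vE (IH w _ _ hw _ FEw) ?linear0 //; lia.
Qed.

Lemma EFmul_inj t (v : Alg) : (2 * t + 2 <= 3 * d.-1)%N -> homog t v ->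
  E (Fmul v) = 0 -> v = 0.
Proof.
move=> ht hv EFv; apply: (Fmul_E_eigen_eq0 (n := 3 * d.-1 - t - t) _ hv); try lia.
apply: (addIr (((3 * d.-1 - t)%:R - t%:R) *: v)).
by rewrite -EFmul_homog // EFv -scalerDl natrB ?addNr ?scale0r //; lia.
Qed.

Lemma EFmul_onto t (v : Alg) : (2 * t + 2 <= 3 * d.-1)%N -> homog t v ->
  exists2 w : Alg, homog t w & v = E (Fmul w).
Proof.
move=> ht hv; set U := Ahom K d t; set G := linfun (@E K d \o @Fmul K d).
have GU : (G @: U)%VS = U.
  apply/eqP; rewrite eqEdim; apply/andP; split.
    apply/subvP => x /memv_imgP [w /memv_Ahom hw ->]; rewrite lfunE /=.
    exact/memv_Ahom/(homog_E (homog_Fmul hw)).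
  have := limg_ker_dim G U; suff -> : (U :&: lker G)%VS = 0%VS by rewrite dimv0 add0n => ->.
  apply/eqP; rewrite -subv0; apply/subvP => x; rewrite memv_cap memv0.
  case/andP => /memv_Ahom hx; rewrite memv_ker lfunE /= => /eqP EFx.
  by rewrite (EFmul_inj ht hx EFx).
have : v \in (G @: U)%VS by rewrite GU; apply/memv_Ahom.
by case/memv_imgP => w /memv_Ahom hw ->; exists w; rewrite ?lfunE.
Qed.

Lemma alternating_eq0_repeat (P : Alg) (b : mon) (i k : 'I_3) :
  alternating P -> i != k -> b i = b k -> P b = 0.
Proof.
move=> alt_P ik bik.
have fix_b : actm (tperm i k)^-1%g b = b.
  apply/ffunP => x; rewrite actm_coord invgK.
  have [->|xi] := eqVneq x i; first by rewrite tpermL.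
  have [->|xk] := eqVneq x k; first by rewrite tpermR.
  by rewrite tpermD // eq_sym.
have := alternating_coord (tperm i k) b alt_P.
rewrite fix_b odd_tperm ik expr1 mulN1r => /eqP; rewrite -subr_eq0 opprK -mulr2n.
by rewrite -mulr_natr mulf_eq0 (negbTE (natf_neq0 (isT : (0 < 2)%N))) orbF => /eqP.
Qed.

Lemma alternating_expand t (P : Alg) : alternating P -> homog t P ->
  P = \sum_(mu in Pplus d.-1 t%:Z) P mu *: alt K mu.
Proof.
move=> alt_P hP; apply/ffunP => b; rewrite sum_ffunE.
have [binj|] := boolP (injectiveb b); last first.
  case/injectivePn => i [k ik bik].
  rewrite (alternating_eq0_repeat alt_P ik bik) big1 // => mu _.
  by rewrite ffunE (alternating_eq0_repeat (alternating_alt K mu) ik bik) scaler0.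
have [s dec_c] := sort_mon (injectiveP _ binj); set c := actm s b in dec_c.
have sort_coord (Q : Alg) : alternating Q -> Q b = sgn s * Q c.
  by move=> alt_Q; rewrite -(alternating_coord s c alt_Q) actmK.
rewrite (sort_coord P alt_P).
under eq_bigr => mu mu_in.
  rewrite ffunE (sort_coord _ (alternating_alt K mu)) alt_decreasing //; last first.
    by move: mu_in; rewrite mem_Pplus => /andP[].
  over.
have [c_in|c_notin] := boolP (c \in Pplus d.-1 t%:Z).
  rewrite (bigD1 c) //= eqxx big1 ?addr0 => [|mu /andP[_ mu_c]]; last first.
    by rewrite eq_sym (negbTE mu_c) mulr0 scaler0.
  by rewrite mulr1 /GRing.scale /= mulrC.
rewrite big1 => [|mu mu_in]; last first.
  by have [e|_] := eqVneq c mu; [move: c_notin; rewrite e mu_in | rewrite mulr0 scaler0].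
rewrite (homog_eq0 hP) ?mulr0 //; apply: contra c_notin => /eqP dc.
by rewrite mem_Pplus dec_c dc eqxx.
Qed.

Definition alt_basis t := [seq alt K mu | mu <- enum (Pplus d.-1 t%:Z)].

Lemma Asign_span t : Asign K d t = <<alt_basis t>>%VS.
Proof.
apply/eqP; rewrite eqEsubv; apply/andP; split.
  apply/subvP => v /memv_Asign [hv alt_v]; rewrite (alternating_expand alt_v hv).
  apply: memv_suml => mu mu_in; apply/memvZ/memv_span.
  by apply: map_f; rewrite mem_enum.
apply/span_subvP => x /mapP [mu]; rewrite mem_enum => mu_in ->.
apply/memv_Asign; split; last exact: alternating_alt.
by move: mu_in; rewrite mem_Pplus eqz_nat => /andP[_ /eqP <-]; apply: homog_alt.
Qed.

Lemma alt_comb_Asign t (beta : mon -> K) :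
  \sum_(mu in Pplus d.-1 t%:Z) beta mu *: alt K mu \in Asign K d t.
Proof.
rewrite Asign_span; apply: memv_suml => mu mu_in; apply/memvZ/memv_span/map_f.
by rewrite mem_enum.
Qed.

Lemma alt_basis_free t : free (alt_basis t).
Proof.
set s := enum (Pplus d.-1 t%:Z); pose x0 : mon := [ffun=> ord0].
have dec_s l : (l < size s)%N -> decreasing (nth x0 s l).
  by move=> ls; have := mem_nth x0 ls; rewrite mem_enum mem_Pplus => /andP[].
apply: (introT (@freeP _ _ _ (in_tuple (alt_basis t)))) => k sum0 i.
have i_lt : (i < size s)%N by apply: leq_trans (ltn_ord i) _; rewrite size_map.
have := congr1 (fun f : Alg => f (nth x0 s i)) sum0; rewrite sum_ffunE ffunE.
rewrite (bigD1 i) //= big1 ?addr0 => [|l li].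
  by rewrite ffunE (nth_map x0) // alt_decreasing ?dec_s // eqxx /GRing.scale /= mulr1.
have l_lt : (l < size s)%N by apply: leq_trans (ltn_ord l) _; rewrite size_map.
rewrite ffunE (nth_map x0) // alt_decreasing ?dec_s // nth_uniq ?enum_uniq //.
by rewrite (inj_eq val_inj) eq_sym (negbTE li) /GRing.scale /= mulr0.
Qed.

Lemma dim_Asign t : \dim (Asign K d t) = pplus d.-1 t%:Z.
Proof.
by rewrite Asign_span (eqP (alt_basis_free t)) size_map /pplus cardE.
Qed.

Lemma E_Asign j : (0 < j)%N -> (2 * j <= 3 * d.-1)%N ->
  (linfun (@E K d) @: Asign K d j)%VS = Asign K d j.-1.
Proof.
move=> j_gt0 hj; apply/eqP; rewrite eqEsubv; apply/andP; split.
  apply/subvP => x /memv_imgP [u /memv_Asign [hu alt_u] ->]; rewrite lfunE /=.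
  by apply/memv_Asign; split; [apply: homog_E | apply: alternating_E].
apply/subvP => v /memv_Asign [hv alt_v].
have [w hw vE] := EFmul_onto (ltac:(lia) : (2 * j.-1 + 2 <= 3 * d.-1)%N) hv.
rewrite {}vE in alt_v *.
have six_neq0 : 6%:R != 0 :> K by apply: natf_neq0.
apply/memv_imgP; exists (6%:R^-1 *: alternator (Fmul w)).
  apply/memv_Asign; split.
    by apply/homogZ/homog_alternator; rewrite -(prednK j_gt0); apply: homog_Fmul.
  by move=> s; rewrite linearZ /= alternator_alternating !scalerA mulrC.
rewrite lfunE /= linearZ /= E_alternator alternator_id //.
by apply/ffunP => b; rewrite !ffunE /GRing.scale /= mulrA mulVf ?mul1r.
Qed.

End CharZero.

Lemma pplus_le0 l (n : int) : n <= 0 -> pplus l n = 0%N.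
Proof.
move=> n_le0; apply/eqP; rewrite cards_eq0; apply/eqP/setP => mu; rewrite !inE.
apply/negbTE/negP => /and3P[lt10 _ /eqP sum_n]; move: n_le0.
rewrite -sum_n lez_nat leqn0 sum_nat_eq0 => /forallP/(_ ord0)/eqP mu0.
by rewrite mu0 in lt10.
Qed.

Theorem theorem3p2 (K : closedFieldType) (charK : [pchar K] =i pred0)
  (d j : nat) (hd : (3 <= d)%N) (hj : (j <= (3 * (d - 1))./2)%N) :
  (forall P : Alg K d,
     (homog j P /\ E P = 0 /\ forall s : 'S_3, sact s P = ((-1) ^+ s) *: P)
     <->
     ((exists beta : mon d -> K,
         P = \sum_(mu in Pplus d.-1 j%:Z) beta mu *: alt K mu) /\ E P = 0))
  /\ (signmult K d j)%:Z = (pplus d.-1 j%:Z)%:Z - (pplus d.-1 (j%:Z - 1))%:Z.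
Proof.
split=> [P|].
  split=> [[hP [EP0 alt_P]]|[[beta ->] EP0]].
    by split=> //; exists (fun mu => P mu); apply: alternating_expand.
  by have /memv_Asign[] := alt_comb_Asign charK j beta.
have := limg_ker_dim (linfun (@E K d)) (Asign K d j).
rewrite /signmult signspaceE dim_Asign //.
case: j hj => [|j] hj.
  by rewrite !pplus_le0 // => /eqP; rewrite addn_eq0 => /andP[/eqP ->].
rewrite E_Asign ?dim_Asign //=; last by move: hj; rewrite -(leq_double) halfK; lia.
have -> : j.+1%:Z - 1 = j%:Z by rewrite -addn1 PoszD addrK.
by move=> <-; rewrite PoszD addrK.
Qed.
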